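(* There exists a strongly complete profinite group $Q$ (i.e. every subgroup of finite index in $Q$ is open) in which the derived subgroup $Q'$ is not closed.
   Context: $Q'$ denotes the abstract derived subgroup of $Q$, i.e. the subgroup generated algebraically by all commutators $[x,y]$, $x,y\in Q$. *)

From mathcomp Require Import all_boot all_order all_algebra.
From mathcomp Require Import all_classical all_reals all_analysis.
Set Implicit Arguments. Unset Strict Implicit. Unset Printing Implicit Defensive.
Local Open Scope classical_set_scope.

Section TopGroup.
Variables (T : topologicalType) (mul : T -> T -> T) (inv : T -> T) (one : T).

Definition is_group : Prop :=
  [/\ (forall x y z, mul x (mul y z) = mul (mul x y) z),
      (forall x, mul one x = x), (forall x, mul x one = x),
      (forall x, mul (inv x) x = one) & (forall x, mul x (inv x) = one)].

Definition is_topological_group : Prop :=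
  [/\ is_group, continuous (fun p : T * T => mul p.1 p.2) & continuous inv].

Definition is_profinite_group : Prop :=
  [/\ is_topological_group, compact [set: T], hausdorff_space T
    & totally_disconnected [set: T]].

Definition is_subgroup (H : set T) : Prop :=
  [/\ H one, (forall x y, H x -> H y -> H (mul x y)) & (forall x, H x -> H (inv x))].

Definition lcoset (x : T) (H : set T) : set T := [set mul x h | h in H].

Definition finite_index (H : set T) : Prop :=
  finite_set (range (fun x => lcoset x H)).

Definition strongly_complete : Prop :=
  forall H : set T, is_subgroup H -> finite_index H -> open H.

Definition commutator (x y : T) : T := mul (mul (inv x) (inv y)) (mul x y).

Definition derived_subgroup : set T :=
  \bigcap_(H in [set H | is_subgroup H /\
                   (forall x y, H (commutator x y))]) H.

End TopGroup.

(* Take Q the product over n of the finite groups H_n of triples (a, b, c) in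
   F_p^m x F_p^m x M_m(F_p), with p > n prime and m = 2n+1, multiplied as
   (a, b, c)(a', b', c') = (a + a', b + b', c + c' + a^T b').  Commutators are
   central with a matrix entry of rank at most 2, so a product of r commutators
   has central entry of rank at most 2r; hence z = ((0, 0, 1_m))_n is not in Q'.
   Every finite truncation of z is a product of commutators, so z lies in the
   closure of Q'.  A subgroup of finite index contains all k!-th powers for some
   k, and k! is prime to the exponent p^2 of H_n once n >= k, so it contains
   every element trivial on the first k coordinates and is therefore open. *)

From mathcomp Require Import all_boot all_order all_algebra.
From mathcomp Require Import all_classical all_reals all_analysis.
From mathcomp Require Import cyclic ring.
Set Implicit Arguments. Unset Strict Implicit. Unset Printing Implicit Defensive.
Local Open Scope classical_set_scope.
Import GRing.Theory.

Fixpoint gpow {A : Type} (mul : A -> A -> A) (one : A) (x : A) (j : nat) : A :=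
  if j is j'.+1 then mul (gpow mul one x j') x else one.

Section Group.
Variables (T : topologicalType) (mul : T -> T -> T) (inv : T -> T) (one : T).
Hypothesis T_group : is_group mul inv one.
Local Notation pow := (gpow mul one).

Lemma gmulgA x y z : mul x (mul y z) = mul (mul x y) z. Proof. by case: T_group. Qed.
Lemma gmul1g x : mul one x = x. Proof. by case: T_group. Qed.
Lemma gmulg1 x : mul x one = x. Proof. by case: T_group. Qed.
Lemma gmulVg x : mul (inv x) x = one. Proof. by case: T_group. Qed.
Lemma gmulgV x : mul x (inv x) = one. Proof. by case: T_group. Qed.

Lemma gmulKg x y : mul (inv x) (mul x y) = y.
Proof. by rewrite gmulgA gmulVg gmul1g. Qed.

Lemma gmulKVg x y : mul x (mul (inv x) y) = y.
Proof. by rewrite gmulgA gmulgV gmul1g. Qed.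

Lemma gmulgI x y z : mul x y = mul x z -> y = z.
Proof. by move=> e; rewrite -(gmulKg x y) e gmulKg. Qed.

Lemma ginv_unique x y : mul x y = one -> inv x = y.
Proof. by move=> e; apply: (@gmulgI x); rewrite gmulgV e. Qed.

Lemma ginvK x : inv (inv x) = x.
Proof. by apply: ginv_unique; rewrite gmulVg. Qed.

Lemma ginvM x y : inv (mul x y) = mul (inv y) (inv x).
Proof. by apply: ginv_unique; rewrite -gmulgA (gmulgA y) gmulgV gmul1g gmulgV. Qed.

Lemma ginv1 : inv one = one.
Proof. by apply: ginv_unique; rewrite gmul1g. Qed.

Lemma ginv_commutator x y :
  inv (commutator mul inv x y) = commutator mul inv y x.
Proof. by rewrite /commutator !ginvM !ginvK. Qed.

Lemma gpowD x i j : pow x (i + j) = mul (pow x i) (pow x j).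
Proof. by elim: j => [|j IHj]; rewrite ?addn0 ?gmulg1 // addnS /= IHj gmulgA. Qed.

Lemma gpowM x i j : pow x (i * j) = pow (pow x i) j.
Proof. by elim: j => [|j IHj]; rewrite ?muln0 // mulnS addnC gpowD IHj. Qed.

Lemma gpow1n j : pow one j = one.
Proof. by elim: j => [|j IHj] //=; rewrite IHj gmul1g. Qed.

Lemma subgroup_gpow H x j : is_subgroup mul inv one H -> H x -> H (pow x j).
Proof. by case=> H1 HM _ Hx; elim: j => [|j IHj] //=; apply: HM. Qed.

(* By Euler's theorem [N ^ totient e = 1 (mod e)]. *)
Lemma gpow_coprime_root e N x : (forall y, pow y e = one) -> (1 < e)%N ->
  coprime N e -> pow (pow x (N ^ (totient e).-1)) N = x.
Proof.
move=> expe e_gt1 coNe.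
rewrite -gpowM -expnSr prednK ?totient_gt0 ?(ltnW e_gt1) //.
rewrite (divn_eq (N ^ _) e) (Euler_exp_totient coNe) modn_small //.
by rewrite gpowD mulnC gpowM expe gpow1n /= !gmul1g.
Qed.

Inductive prod_commutators : nat -> T -> Prop :=
| prod_commutators0 : prod_commutators 0 one
| prod_commutatorsS r x y z :
    prod_commutators r x -> prod_commutators r.+1 (mul x (commutator mul inv y z)).

Lemma prod_commutatorsM r s x w :
  prod_commutators r x -> prod_commutators s w -> prod_commutators (r + s) (mul x w).
Proof.
move=> Px; elim=> [|s' w' y z _ IHw]; first by rewrite addn0 gmulg1.
by rewrite addnS gmulgA; apply: prod_commutatorsS.
Qed.

Lemma prod_commutators1 y z : prod_commutators 1 (commutator mul inv y z).
Proof. by rewrite -[commutator _ _ _ _]gmul1g; apply: prod_commutatorsS; constructor. Qed.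

Lemma prod_commutatorsV r x : prod_commutators r x -> prod_commutators r (inv x).
Proof.
elim=> [|r' x' y z _ IHx]; first by rewrite ginv1; constructor.
rewrite ginvM ginv_commutator -add1n.
exact: prod_commutatorsM (prod_commutators1 _ _) IHx.
Qed.

Lemma derived_subgroup_prod_commutators x :
  derived_subgroup mul inv one x -> exists r, prod_commutators r x.
Proof.
move/(_ (fun x => exists r, prod_commutators r x)); apply; split=> [|y z].
  split=> [|a b [r Pa] [s Pb]|a [r Pa]]; first by exists 0%N; constructor.
  - by exists (r + s)%N; apply: prod_commutatorsM.
  - by exists r; apply: prod_commutatorsV.
by exists 1%N; apply: prod_commutators1.
Qed.

(* Pigeonhole on the cosets [y ^ j H], [j <= k], when [H] has at most [k] cosets. *)
Lemma finite_index_gpow_bounded H : is_subgroup mul inv one H -> finite_index mul H ->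
  exists k, forall y, exists2 d, (0 < d <= k)%N & H (pow y d).
Proof.
move=> [H1 _ _] /(finite_set_leP _).1[k card_cosets].
exists k => y; apply: contrapT => noHpow.
pose c j := lcoset mul (pow y j) H.
have c_inj : {in `I_k.+1 &, injective c}.
  suff c_neq i j : (i < j < k.+1)%N -> c i <> c j.
    move=> i j; rewrite !in_setE /= => ik jk cij.
    by case: (ltngtP i j) => [ij|ji|//]; [case: (c_neq i j) | case: (c_neq j i)];
      rewrite ?ij ?ji.
  case/andP=> ij jk cij; have : c i (pow y j).
    by rewrite cij; exists one => //; rewrite gmulg1.
  case=> h Hh; rewrite -(subnKC (ltnW ij)) gpowD => /gmulgI ehj.
  apply: noHpow; exists (j - i)%N; last by rewrite -ehj.
  by rewrite subn_gt0 ij leq_subLR -ltnS (leq_trans jk) // ltnS leq_addl.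
have : (`I_k.+1 #<= range (fun x => lcoset mul x H))%card.
  rewrite -(card_le_eql (inj_card_eq c_inj)); apply: subset_card_le.
  by move=> _ [j _ <-]; exists (pow y j).
by move/card_le_trans/(_ card_cosets); rewrite card_le_II ltnn.
Qed.

Lemma finite_index_gpow_fact H : is_subgroup mul inv one H -> finite_index mul H ->
  exists k, forall y, H (pow y k`!).
Proof.
move=> Hsub /(finite_index_gpow_bounded Hsub)[k Hpow]; exists k => y.
have [d dk Hyd] := Hpow y.
by rewrite -(divnK (dvdn_fact dk)) mulnC gpowM; apply: subgroup_gpow.
Qed.

End Group.

Section DiscreteProduct.
Variables (I : choiceType) (G : I -> finType).
Variables (mul : forall i, G i -> G i -> G i) (inv : forall i, G i -> G i).
Variable one : forall i, G i.
Hypothesis G_group :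
  forall i, is_group (T := discrete_topology (G i)) (@mul i) (@inv i) (one i).

Definition prod_discrete := prod_topology (fun i => discrete_topology (G i)).

(* Instance resolution does not unfold [prod_discrete] on its own. *)
#[global] Instance prod_discrete_nbhs_filter (f : prod_discrete) :
  Filter (nbhs f) := nbhs_filter f.

Definition prod_mul (f g : prod_discrete) : prod_discrete := fun i => mul (f i) (g i).
Definition prod_inv (f : prod_discrete) : prod_discrete := fun i => inv (f i).
Definition prod_one : prod_discrete := one.

Lemma prod_discrete_group : is_group prod_mul prod_inv prod_one.
Proof.
split=> [f g h|f|f|f|f]; apply: functional_extensionality_dep => i;
  rewrite /prod_mul /prod_inv /prod_one.
- apply: (gmulgA (G_group i)).
- apply: (gmul1g (G_group i)).
- apply: (gmulg1 (G_group i)).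
- apply: (gmulVg (G_group i)).
- apply: (gmulgV (G_group i)).
Qed.

Lemma nbhs_coord (f : prod_discrete) i : nbhs f [set g | g i = f i].
Proof.
exact: (@discrete_cvg (discrete_topology (G i)) _ _ _).1 (@proj_continuous _ _ i f).
Qed.

Lemma continuous_locally_constant_coords (X : topologicalType) (h : X -> prod_discrete) :
  (forall i x, \forall y \near x, h y i = h x i) -> continuous h.
Proof.
move=> hh x; apply/cvg_sup => i; move: x.
apply: (@continuous_comp_initial _ X (discrete_topology (G i)) (fun g : prod_discrete => g i)).
move=> x; apply: (@discrete_cvg (discrete_topology (G i)) _ _ _).2; exact: hh.
Qed.

Lemma prod_discrete_profinite : is_profinite_group prod_mul prod_inv prod_one.
Proof.
split; first split.
- exact: prod_discrete_group.
- apply: continuous_locally_constant_coords => i [f g].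
  exists ([set f' | f' i = f i], [set g' | g' i = g i]) => /=.
    by split; apply: nbhs_coord.
  by move=> [f1 g1] [/= e1 e2]; rewrite /prod_mul /= e1 e2.
- apply: continuous_locally_constant_coords => i f.
  by apply: filterS (nbhs_coord f i) => g; rewrite /prod_inv => ->.
- have finite_factor i : compact [set: discrete_topology (G i)].
    exact/finite_compact/(@finite_finset (G i)).
  have := tychonoff finite_factor.
  by congr compact; rewrite eqEsubset.
- by apply: hausdorff_product => i; apply: discrete_hausdorff.
- have := @totally_disconnected_prod I _ (fun _ => setT) (fun i =>
    zero_dimension_totally_disconnected (@discrete_zero_dimension (discrete_topology (G i)))).
  by congr totally_disconnected; rewrite eqEsubset.
Qed.

Lemma gpow_coord (x : prod_discrete) j i :
  gpow prod_mul prod_one x j i = gpow (@mul i) (one i) (x i) j.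
Proof. by elim: j => [|j IHj] //=; rewrite /prod_mul IHj. Qed.

Lemma prod_commutators_coord r (x : prod_discrete) :
  prod_commutators prod_mul prod_inv prod_one r x -> forall i,
  prod_commutators (T := discrete_topology (G i)) (@mul i) (@inv i) (one i) r (x i).
Proof.
elim=> [|r' x' y z _ IHx] i; first exact: prod_commutators0.
exact: (prod_commutatorsS _ _ (IHx i)).
Qed.

Definition prod_single i (v : G i) : prod_discrete := dfwith prod_one i v.

Lemma prod_single_mul i (u v : G i) :
  prod_single (mul u v) = prod_mul (prod_single u) (prod_single v).
Proof.
apply: functional_extensionality_dep => j; rewrite /prod_mul /prod_single.
have [<-|ne] := eqVneq i j; first by rewrite !dfwithin.
by rewrite !dfwithout // (gmul1g (G_group j)).
Qed.

Lemma prod_single_inv i (u : G i) : prod_single (inv u) = prod_inv (prod_single u).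
Proof.
apply: functional_extensionality_dep => j; rewrite /prod_inv /prod_single.
have [<-|ne] := eqVneq i j; first by rewrite !dfwithin.
by rewrite !dfwithout // (ginv1 (G_group j)).
Qed.

Lemma prod_single_one i : prod_single (one i) = prod_one.
Proof.
apply: functional_extensionality_dep => j; rewrite /prod_single.
by have [<-|ne] := eqVneq i j; rewrite ?dfwithin ?dfwithout.
Qed.

Lemma derived_subgroup_prod_single i (v : G i) :
  derived_subgroup (T := discrete_topology (G i)) (@mul i) (@inv i) (one i) v ->
  derived_subgroup prod_mul prod_inv prod_one (prod_single v).
Proof.
move=> Dv K [[K1 KM KV] Kcomm]; apply: (Dv (fun u => K (prod_single u))); split.
  split=> [|u w Ku Kw|u Ku].
  - by rewrite prod_single_one.
  - by rewrite prod_single_mul; apply: KM.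
  - by rewrite prod_single_inv; apply: KV.
by move=> u w; rewrite /commutator !prod_single_mul !prod_single_inv; apply: Kcomm.
Qed.

End DiscreteProduct.

Section SequenceProduct.
Variable G : nat -> finType.
Variables (mul : forall n, G n -> G n -> G n) (inv : forall n, G n -> G n).
Variable one : forall n, G n.
Hypothesis G_group :
  forall n, is_group (T := discrete_topology (G n)) (@mul n) (@inv n) (one n).

Local Notation Q := (prod_discrete G).
Local Notation prod_mul := (prod_mul mul).
Local Notation prod_inv := (prod_inv inv).
Local Notation prod_one := (prod_one one).

Definition truncate (z : Q) N : Q := fun n => if (n < N)%N then z n else one n.

Lemma closure_derived_subgroup (z : Q) :
  (forall n, derived_subgroup (T := discrete_topology (G n))
               (@mul n) (@inv n) (one n) (z n)) ->
  closure (derived_subgroup prod_mul prod_inv prod_one) z.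
Proof.
move=> Dz.
have truncate_derived N : derived_subgroup prod_mul prod_inv prod_one (truncate z N).
  move=> K [Ksub Kcomm]; have [K1 KM _] := Ksub; elim: N => [|N IHN].
    by rewrite (_ : truncate z 0 = prod_one) //; apply: functional_extensionality_dep.
  suff -> : truncate z N.+1 = prod_mul (truncate z N) (prod_single one (z N)).
    exact: KM IHN (derived_subgroup_prod_single G_group (Dz N) (conj Ksub Kcomm)).
  apply: functional_extensionality_dep => n.
  rewrite /prod_mul /prod_single /truncate ltnS.
  have [<-|ne] := eqVneq N n.
    by rewrite ltnn leqnn dfwithin (gmul1g (G_group N)).
  rewrite dfwithout // leq_eqVlt eq_sym (negbTE ne) /=.
  by case: (n < N)%N; rewrite ?(gmulg1 (G_group n)) ?(gmul1g (G_group n)).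
have truncate_cvg : truncate z @ \oo --> z.
  apply/cvg_sup => N U [V] [[W] oW <-] WzN WU.
  apply: (filterS WU); rewrite nbhs_simpl; exists N.+1 => // n /=.
  by rewrite /truncate => ->.
move=> B /truncate_cvg; rewrite nbhs_simpl => -[N _ Bz].
by exists (truncate z N); split; [exact: truncate_derived | exact: Bz (leqnn N)].
Qed.

Lemma nbhs_prefix (x : Q) k : \forall f \near x, forall n, (n <= k)%N -> f n = x n.
Proof.
elim: k => [|k IHk].
  by apply: filterS (nbhs_coord x 0) => f x0 n; rewrite leqn0 => /eqP ->.
apply: filterS (filterI IHk (nbhs_coord x k.+1)) => f [xk xk1] n.
by rewrite leq_eqVlt ltnS => /orP[/eqP ->|]; [exact: xk1 | exact: xk].
Qed.

Lemma gpow_surjective_tail N k (g : Q) :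
  (forall n, (k < n)%N -> forall u : G n, exists w, gpow (@mul n) (one n) w N = u) ->
  (forall n, (n <= k)%N -> g n = one n) -> exists y, gpow prod_mul prod_one y N = g.
Proof.
move=> roots g1; pose y : Q := fun n =>
  if (k < n)%N then odflt (one n) [pick w | gpow (@mul n) (one n) w N == g n] else one n.
exists y; apply: functional_extensionality_dep => n; rewrite gpow_coord /y.
case: ltnP => [kn|nk]; last by rewrite (gpow1n (G_group n)) g1.
case: pickP => [w /eqP //|no_root].
by have [w /eqP] := roots n kn (g n); rewrite no_root.
Qed.

Lemma strongly_complete_prod :
  (forall N, (0 < N)%N -> exists k, forall n, (k < n)%N ->
     forall u : G n, exists w, gpow (@mul n) (one n) w N = u) ->
  strongly_complete prod_mul prod_inv prod_one.
Proof.
move=> roots K Ksub Kfin; have [_ KM _] := Ksub.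
have Qgroup := prod_discrete_group G_group.
have [N KN] := finite_index_gpow_fact Qgroup Ksub Kfin.
have [k rootsN] := roots N`! (fact_gt0 N).
rewrite openE => x Kx; apply: filterS (nbhs_prefix x k) => f fx.
rewrite -(gmulKVg Qgroup x f); apply: KM Kx _.
have [n nk|y <-] := gpow_surjective_tail (g := prod_mul (prod_inv x) f) rootsN; last exact: KN.
by rewrite /prod_mul /prod_inv fx // (gmulVg (G_group n)).
Qed.

End SequenceProduct.

Section Heisenberg.
Variables (R : fieldType) (m : nat).

(* [(a, b, c)] encodes the unitriangular block matrix
   [[1_m, a^T, c], [0, 1, b], [0, 0, 1_m]]; [heis_mul] is the matrix product. *)
Definition heis := ('rV[R]_m * 'rV[R]_m * 'M[R]_m)%type.

Local Open Scope ring_scope.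

Definition heis_mul (x y : heis) : heis :=
  (x.1.1 + y.1.1, x.1.2 + y.1.2, x.2 + y.2 + x.1.1^T *m y.1.2).
Definition heis_inv (x : heis) : heis := (- x.1.1, - x.1.2, - x.2 + x.1.1^T *m x.1.2).
Definition heis_one : heis := (0, 0, 0).

Local Notation heisT := (discrete_topology heis).

Ltac outer_product_ring := apply/matrixP => i j; rewrite !mxE ?big_ord1 ?mxE; ring.

Lemma heis_group : is_group (T := heisT) heis_mul heis_inv heis_one.
Proof.
split=> [[[a b] c] [[a' b'] c'] [[a'' b''] c'']|[[a b] c]|[[a b] c]|[[a b] c]|[[a b] c]];
  rewrite /heis_mul /heis_inv /=; congr (_, _, _);
  rewrite ?addrA ?add0r ?addr0 ?addNr ?addrN //; outer_product_ring.
Qed.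

Lemma heis_commutator (x y : heis) : commutator (T := heisT) heis_mul heis_inv x y =
  (0, 0, x.1.1^T *m y.1.2 - y.1.1^T *m x.1.2).
Proof.
case: x y => [[a b] c] [[a' b'] c']; rewrite /commutator /heis_mul /heis_inv /=.
by congr (_, _, _); outer_product_ring.
Qed.

Lemma heis_gpow_central (D : 'M[R]_m) j :
  gpow heis_mul heis_one (0, 0, D) j = (0, 0, D *+ j).
Proof.
elim: j => [|j IHj] //=; rewrite IHj /heis_mul /= !addr0 mulrSr.
by rewrite trmx0 mul0mx addr0.
Qed.

Lemma heis_gpow (x : heis) j :
  exists D, gpow heis_mul heis_one x j = (x.1.1 *+ j, x.1.2 *+ j, D).
Proof.
elim: j => [|j [D IHj]]; first by exists 0.
by rewrite /= IHj /heis_mul /=; eexists; rewrite !mulrSr.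
Qed.

Lemma heis_exponent p (x : heis) : p \in [pchar R] ->
  gpow heis_mul heis_one x (p * p) = heis_one.
Proof.
move=> pR; have mulrn_p k l (w : 'M[R]_(k, l)) : w *+ p = 0.
  by rewrite -scaler_nat (pcharf0 pR) scale0r.
rewrite (gpowM heis_group); have [D ->] := heis_gpow x p.
by rewrite !mulrn_p heis_gpow_central mulrn_p.
Qed.

Lemma outer_product_expansion (D : 'M[R]_m) :
  D = \sum_(j < m) (delta_mx 0 j : 'rV[R]_m)^T *m row j D.
Proof.
apply/matrixP => a b; rewrite summxE (bigD1 a) //= big1 => [|j ne].
  by rewrite !mxE big_ord1 !mxE !eqxx /= mul1r addr0.
by rewrite !mxE big_ord1 !mxE (eq_sym a j) (negbTE ne) andbF mul0r.
Qed.

(* [(0, 0, D)] is the product over [j] of the commutators of [(e_j, 0, 0)]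
   and [(0, row j D, 0)]. *)
Lemma heis_central_derived (D : 'M[R]_m) :
  derived_subgroup (T := heisT) heis_mul heis_inv heis_one (0, 0, D).
Proof.
move=> K [[K1 KM _] Kcomm]; rewrite (outer_product_expansion D).
elim/big_ind: _ => // [A B KA KB|j _].
  suff -> : (0, 0, A + B) = heis_mul (0, 0, A) (0, 0, B) by exact: KM.
  by rewrite /heis_mul /= addr0 trmx0 mul0mx addr0.
suff -> : (0, 0, (delta_mx 0 j)^T *m row j D) =
    commutator (T := heisT) heis_mul heis_inv (delta_mx 0 j, 0, 0) (0, row j D, 0).
  exact: Kcomm.
by rewrite heis_commutator /= trmx0 mul0mx subr0.
Qed.

Lemma rank_prod_commutators r (x : heis) :
  prod_commutators (T := heisT) heis_mul heis_inv heis_one r x ->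
  [/\ x.1.1 = 0, x.1.2 = 0 & (\rank x.2 <= r.*2)%N].
Proof.
elim=> [|r' w y z _ [w1 w2 rank_w]]; first by rewrite /= mxrank0.
rewrite heis_commutator /heis_mul /= w1 w2 !addr0 trmx0 mul0mx addr0 doubleS.
set E := _ - _; have rank_E : (\rank E <= 2)%N.
  apply: leq_trans (mxrank_add _ _) _; rewrite mxrank_opp.
  exact: leq_add (mulmx_max_rank _ _) (mulmx_max_rank _ _).
split=> //; apply: leq_trans (mxrank_add _ _) _.
by rewrite -addn2; apply: leq_add rank_w rank_E.
Qed.

End Heisenberg.

Definition prime_gt n := s2val (prime_above n).

Lemma ltn_prime_gt n : (n < prime_gt n)%N. Proof. exact: s2valP (prime_above n). Qed.

Lemma prime_gt_prime n : prime (prime_gt n). Proof. exact: s2valP' (prime_above n). Qed.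

Definition factor n : finType := heis 'F_(prime_gt n) n.*2.+1.

Definition heis_product := prod_discrete factor.

Local Notation mul := (fun n => @heis_mul 'F_(prime_gt n) n.*2.+1).
Local Notation inv := (fun n => @heis_inv 'F_(prime_gt n) n.*2.+1).
Local Notation one := (fun n => heis_one 'F_(prime_gt n) n.*2.+1).

Lemma factor_group n :
  is_group (T := discrete_topology (factor n)) (mul n) (inv n) (one n).
Proof. exact: heis_group. Qed.

(* [factor n] has exponent dividing [p ^ 2] with [p = prime_gt n > N]. *)
Lemma factor_root N n (u : factor n) : (0 < N)%N -> (N < n)%N ->
  exists w, gpow (mul n) (one n) w N = u.
Proof.
move=> N_gt0 Nn; have p_prime := prime_gt_prime n.
eexists; apply: (gpow_coprime_root (factor_group n)).
- by move=> w; apply: heis_exponent; apply: pchar_Fp.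
- by rewrite (@ltn_mul 1 1) // prime_gt1.
rewrite coprimeMr andbb coprime_sym prime_coprime // gtnNdvd //.
exact: ltn_trans Nn (ltn_prime_gt n).
Qed.

Definition central_identity : heis_product := fun n => (0, 0, 1%:M)%R.

Lemma central_identity_not_derived :
  ~ derived_subgroup (prod_mul mul) (prod_inv inv) (prod_one one) central_identity.
Proof.
move/(derived_subgroup_prod_commutators (prod_discrete_group factor_group)) => [r].
move/prod_commutators_coord/(_ r)/rank_prod_commutators => [_ _].
by rewrite /central_identity /= mxrank1 ltnn.
Qed.

Lemma central_identity_closure :
  closure (derived_subgroup (prod_mul mul) (prod_inv inv) (prod_one one)) central_identity.
Proof.
by apply: (closure_derived_subgroup factor_group) => n; apply: heis_central_derived.
Qed.

Theorem proposition1 :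
  exists (T : topologicalType) (mul : T -> T -> T) (inv : T -> T) (one : T),
    [/\ is_profinite_group mul inv one,
        strongly_complete mul inv one
      & ~ closed (derived_subgroup mul inv one)].
Proof.
exists heis_product, (prod_mul mul), (prod_inv inv), (prod_one one); split.
- exact: prod_discrete_profinite factor_group.
- apply: (strongly_complete_prod factor_group) => N N_gt0.
  by exists N => n Nn u; apply: factor_root.
- move=> closed_derived; apply: central_identity_not_derived.
  exact: closed_derived central_identity_closure.
Qed.
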